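(* In the FIND setting of the context, let $\mathcal C_r$ and $\mathcal C_s$ be leaf clusters of $\mathcal T$, choose consistent orderings of $\mathcal T_r^+$ and $\mathcal T_s^+$, and let $\boldsymbol\Sigma_{r,g+}$, $\boldsymbol\Sigma_{s,g+}$ denote the matrices produced by the elimination process for target $r$ and target $s$. Then for every cluster $\mathcal C_i$ that is a node of both $\mathcal T_r^+$ and $\mathcal T_s^+$, $$\boldsymbol\Sigma_{r,i+}(\mathcal B_i,\mathcal B_i)=\boldsymbol\Sigma_{s,i+}(\mathcal B_i,\mathcal B_i).$$
   Context: Setting (FIND). $\mathcal M$ is a finite set of mesh nodes; $\mathbf A$ is an invertible complex matrix indexed by $\mathcal M\times\mathcal M$, structurally symmetric ($A_{ij}\neq0\iff A_{ji}\neq0$); distinct nodes $i,j$ are connected if $A_{ij}\neq 0$. $\boldsymbol\Sigma$ is a complex matrix indexed by $\mathcal M\times\mathcal M$ with $\Sigma_{ij}=0$ whenever $i\neq j$ and $i,j$ are not connected. Matrices are indexed by $\mathcal M$ itself (the ordering only determines the sequence of eliminations). $\dagger$ is conjugate transpose, $\mathbf X^{-\dagger}=(\mathbf X^{-1})^\dagger$. $\mathbf X(X,Y)$ is the submatrix with rows in $X$, columns in $Y$. For a cluster $\mathcal C\subseteq\mathcal M$: boundary set $\mathcal B_{\mathcal C}=\{i\in\mathcal C: A_{ij}\neq 0\text{ for some } j\notin\mathcal C\}$, inner set $\mathcal I_{\mathcal C}=\mathcal C\setminus\mathcal B_{\mathcal C}$; for $\mathcal C_g$ write $\mathcal B_g,\mathcal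 I_g$. Cluster tree: $\mathcal T$ is a rooted binary tree of clusters with root $\mathcal M$, each non-leaf cluster the disjoint union of its two children. For a leaf $\mathcal C_r$ with path $r=a_0,\dots,a_d$ (root) and $b_k$ the sibling of $a_k$, the augmented tree $\mathcal T_r^+$ has root $\mathcal C_{-r}=\mathcal M\setminus\mathcal C_r$; for $0\le k\le d-2$, $\mathcal C_{-a_k}=\mathcal M\setminus\mathcal C_{a_k}$ has children $\mathcal C_{b_k}$ and $\mathcal C_{-a_{k+1}}$, with $\mathcal C_{-a_{d-1}}$ identified with $\mathcal C_{b_{d-1}}$; each basic cluster $\mathcal C_{b_k}$ carries its subtree from $\mathcal T$. (A cluster common to two augmented trees has the same subtree in both.) Private inner nodes: $\mathcal S_g=\mathcal I_g$ for a leaf $g$ of an augmented tree; $\mathcal S_g=\mathcal I_g\setminus(\mathcal I_i\cup\mathcal I_j)$ if $g$ has children $i,j$. Consistent ordering: a total order $g_1,\dots,g_m$ of the nodes of $\mathcal T_r^+$ with every node after all its descendants. Elimination for target $r$: $\mathbf A_{r,g_1}=\mathbf A$, $\boldsymbol\Sigma_{r,g_1}=\boldsymbol\Sigma$; for each $g$ (with $\mathbf A_{r,g}(\mathcal S_g,\mathcal S_g)$ invertible), $\mathcal L_g=\mathbf A_{r,g}(\mathcal B_g,\mathcal S_g)\mathbf A_{r,g}(\mathcal S_g,\mathcal S_g)^{-1}$, $\mathbf L_g$ is the identity on $\mathcal M$ except $\mathbf L_g(\mathcal B_g,\mathcal S_g)=\mathcal L_g$, $\mathbf A_{r,g+}=\mathbf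 L_g^{-1}\mathbf A_{r,g}$, $\boldsymbol\Sigma_{r,g+}=\mathbf L_g^{-1}\boldsymbol\Sigma_{r,g}\mathbf L_g^{-\dagger}$, and $\mathbf A_{r,g_{t+1}}=\mathbf A_{r,g_t+}$, $\boldsymbol\Sigma_{r,g_{t+1}}=\boldsymbol\Sigma_{r,g_t+}$. Thus $\boldsymbol\Sigma_{r,i+}$ is the matrix just after eliminating $\mathcal S_i$. *)

From HB Require Import structures.
From mathcomp Require Import all_boot all_order all_algebra.
Set Implicit Arguments. Unset Strict Implicit. Unset Printing Implicit Defensive.
Import Order.TTheory GRing.Theory Num.Theory.
Local Open Scope ring_scope.

Section FIND.
Variable C : numClosedFieldType.
Variable n : nat.
Notation node := 'I_n.
Notation mx := 'M[C]_n.

Definition ctmx (M : mx) : mx := (map_mx Num.conj M)^T.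

Definition selmx (X : {set node}) : 'M[C]_(#|X|, n) :=
  \matrix_(a < #|X|, j < n) (enum_val a == j)%:R.

Definition subm (X Y : {set node}) (M : mx) : 'M[C]_(#|X|, #|Y|) :=
  selmx X *m M *m (selmx Y)^T.

Definition struct_sym (A : mx) := forall i j, (A i j != 0) = (A j i != 0).
Definition connected (A : mx) (i j : node) := (i != j) && (A i j != 0).
Definition sigma_pattern (A Sig : mx) :=
  forall i j, i != j -> ~~ connected A i j -> Sig i j = 0.

Definition bnd (A : mx) (X : {set node}) : {set node} :=
  [set i in X | [exists j, (j \notin X) && (A i j != 0)]].
Definition inner (A : mx) (X : {set node}) : {set node} := X :\: bnd A X.

Inductive ctree := CLeaf of {set node} | CNode of {set node} & ctree & ctree.

Definition croot (t : ctree) := match t with CLeaf X => X | CNode X _ _ => X end.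

Fixpoint ctree_wf (t : ctree) : bool :=
  match t with
  | CLeaf _ => true
  | CNode X l r => [&& X == croot l :|: croot r, [disjoint croot l & croot r],
                       ctree_wf l & ctree_wf r]
  end.

Definition cluster_tree (T : ctree) := (croot T == setT) && ctree_wf T.

(* positions in T: sequences of directions from the root (false = left) *)
Fixpoint csub (t : ctree) (p : seq bool) : option ctree :=
  match p with
  | [::] => Some t
  | b :: p' => match t with
               | CLeaf _ => None
               | CNode _ l r => csub (if b then r else l) p'
               end
  end.

Definition is_leaf_pos (T : ctree) (p : seq bool) :=
  if csub T p is Some (CLeaf _) then true else false.

Definition parent (q : seq bool) := take (size q).-1 q.
Definition sibling (q : seq bool) := rcons (parent q) (~~ last false q).

(* node labels of augmented trees: (false, p) = basic cluster at position p
   of T; (true, p) = complement cluster M \ C_p *)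
Definition lab := (bool * seq bool)%type.

Definition clus (T : ctree) (g : lab) : {set node} :=
  let X := if csub T g.2 is Some t then croot t else set0 in
  if g.1 then ~: X else X.

Inductive atree := ALeaf of lab | ANode of lab & atree & atree.

Definition aroot (t : atree) := match t with ALeaf g => g | ANode g _ _ => g end.

Fixpoint conv (p : seq bool) (t : ctree) : atree :=
  match t with
  | CLeaf _ => ALeaf (false, p)
  | CNode _ l r => ANode (false, p) (conv (rcons p false) l) (conv (rcons p true) r)
  end.

Definition basic_at (T : ctree) (p : seq bool) : atree :=
  if csub T p is Some t then conv p t else ALeaf (false, p).

(* augk T p k is the augmented subtree rooted at C_{-a}, a = take k p
   (for k >= 2); for k = 1 it is the subtree of the sibling b_{d-1}. *)
Fixpoint augk (T : ctree) (p : seq bool) (k : nat) : atree :=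
  match k with
  | 0 => ALeaf (true, [::])
  | 1 => basic_at T (sibling (take 1 p))
  | k'.+1 => ANode (true, take k p) (basic_at T (sibling (take k p))) (augk T p k')
  end.

(* augmented tree T_r^+ for the leaf at position p *)
Definition aug (T : ctree) (p : seq bool) : atree := augk T p (size p).

Fixpoint alabels (t : atree) : seq lab :=
  match t with ALeaf g => [:: g] | ANode g l r => g :: alabels l ++ alabels r end.

Fixpoint asub (t : atree) (g : lab) : option atree :=
  match t with
  | ALeaf h => if h == g then Some t else None
  | ANode h l r => if h == g then Some t else
                   if asub l g is Some u then Some u else asub r g
  end.

Definition descendants (t : atree) (g : lab) : seq lab :=
  if asub t g is Some u then behead (alabels u) else [::].

Definition consistent (t : atree) (o : seq lab) :=
  [&& uniq o, perm_eq o (alabels t) &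
      all (fun g : lab => all (fun h => (index h o < index g o)%N) (descendants t g)) o].

Definition priv (A : mx) (T : ctree) (t : atree) (g : lab) : {set node} :=
  if asub t g is Some (ANode _ l r) then
    inner A (clus T g) :\: (inner A (clus T (aroot l)) :|: inner A (clus T (aroot r)))
  else inner A (clus T g).

(* one elimination step at node g; state = (A_{r,g}, Sigma_{r,g}) *)
Definition elimL (A : mx) (T : ctree) (t : atree) (g : lab) (Ac : mx) : mx :=
  let B := bnd A (clus T g) in
  let S := priv A T t g in
  let cL := subm B S Ac *m invmx (subm S S Ac) in
  let E := (selmx B)^T *m cL *m selmx S in
  \matrix_(i, j) if (i \in B) && (j \in S) then E i j else (i == j)%:R.

Definition step (A : mx) (T : ctree) (t : atree) (st : mx * mx) (g : lab) : mx * mx :=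
  let Li := invmx (elimL A T t g st.1) in
  (Li *m st.1, Li *m st.2 *m ctmx Li).

(* state just before eliminating g, and Sigma_{r,g+} (just after) *)
Definition state_before (A Sig : mx) T t (o : seq lab) (g : lab) :=
  foldl (step A T t) (A, Sig) (take (index g o) o).
Definition Sigma_plus (A Sig : mx) T t (o : seq lab) (g : lab) : mx :=
  (foldl (step A T t) (A, Sig) (take (index g o).+1 o)).2.

Definition elim_ok (A Sig : mx) T t (o : seq lab) :=
  forall g, g \in o ->
    subm (priv A T t g) (priv A T t g) (state_before A Sig T t o g).1 \in unitmx.

End FIND.

From HB Require Import structures.
From mathcomp Require Import all_boot all_order all_algebra.
Import Order.TTheory GRing.Theory Num.Theory.
Local Open Scope ring_scope.
Set Implicit Arguments. Unset Strict Implicit. Unset Printing Implicit Defensive.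

(** An elimination step at [g] multiplies by [L_g^-1 = 1 - N_g], where [N_g] is
    supported on [B_g x S_g], a subset of [C_g x C_g], and [N_g^2 = 0]. Hence steps at
    nodes with disjoint clusters commute, and a step at [g] leaves every entry of
    [Sigma] outside the rows and columns [B_g] unchanged. In a consistent ordering,
    a node eliminated before [i] either lies in the subtree of [i] or has a cluster
    disjoint from [C_i], so [Sigma_{r,i+}(B_i,B_i)] is what the eliminations in the
    subtree of [i] alone produce. That subtree is the same in both augmented trees,
    and two consistent orderings of it differ by swaps of incomparable, hence
    disjoint, nodes. *)

Section CommutingFolds.
Variables (X : eqType) (St : Type) (f : St -> X -> St).

Lemma foldl_commute_last a s st :
  (forall y, y \in s -> forall st, f (f st a) y = f (f st y) a) ->
  foldl f (f st a) s = f (foldl f st s) a.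
Proof.
elim: s st => [|y s IH] st comm //=.
by rewrite comm ?mem_head // IH // => z zs; apply: comm; rewrite inE zs orbT.
Qed.

Lemma foldl_filter_split (P : pred X) s st :
  (forall x y, x \in s -> y \in s -> P x -> ~~ P y ->
     forall st, f (f st x) y = f (f st y) x) ->
  foldl f st s = foldl f st (filter P s ++ filter (predC P) s).
Proof.
elim: s st => [|a s IH] st comm //=.
have comm_s x y : x \in s -> y \in s -> P x -> ~~ P y ->
    forall st, f (f st x) y = f (f st y) x.
  by move=> xs ys; apply: comm; rewrite inE ?xs ?ys orbT.
case Pa: (P a) => /=; first by rewrite IH.
rewrite IH // foldl_cat foldl_commute_last ?foldl_cat // => y.
rewrite mem_filter => /andP [Py ys] st'.
by symmetry; apply: comm; rewrite ?inE ?ys ?eqxx ?orbT ?Pa.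
Qed.

Lemma eq_in_foldl (f' : St -> X -> St) s st :
  (forall x, x \in s -> forall st, f st x = f' st x) -> foldl f st s = foldl f' st s.
Proof.
elim: s st => [|a s IH] st eq_f //=.
by rewrite eq_f ?mem_head // IH // => x xs; apply: eq_f; rewrite inE xs orbT.
Qed.

Lemma foldl_invariant (Y : Type) (g : St -> Y) s st :
  (forall x, x \in s -> forall st, g (f st x) = g st) -> g (foldl f st s) = g st.
Proof.
elim: s st => [|a s IH] st inv //=.
by rewrite IH ?inv ?mem_head // => x xs; apply: inv; rewrite inE xs orbT.
Qed.

(* The last element of [s1] is moved to the end of [s2], past the elements that
   follow it there, all of which are [r]-incomparable to it. *)
Lemma foldl_perm_pairwise (r : rel X) (D : pred X) :
  {in D &, forall x y, x != y -> ~~ r x y -> ~~ r y x ->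
     forall st, f (f st x) y = f (f st y) x} ->
  forall s1 s2, {subset s1 <= D} -> uniq s1 -> perm_eq s1 s2 ->
  pairwise (fun x y => ~~ r x y) s1 -> pairwise (fun x y => ~~ r x y) s2 ->
  forall st, foldl f st s1 = foldl f st s2.
Proof.
move=> comm s1; elim/last_ind: s1 => [|s1 x IH] s2 s1D U P p1 p2 st.
  by move: P; rewrite perm_sym => /perm_nilP ->.
have xs2 : x \in s2 by rewrite -(perm_mem P) mem_rcons mem_head.
move: P p2; case/splitPr: xs2 => a b P p2.
have xNb : x \notin b.
  have : uniq (a ++ x :: b) by rewrite -(perm_uniq P).
  by rewrite cat_uniq /= => /and3P [_ _ /andP []].
have x_b y : y \in b -> forall st, f (f st x) y = f (f st y) x.
  move=> yb; have ys1 : y \in rcons s1 x by rewrite (perm_mem P) mem_cat inE yb !orbT.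
  move: ys1 p1; rewrite mem_rcons inE pairwise_rcons => /predU1P [yx|ys1].
    by move: xNb; rewrite -yx yb.
  move=> /andP [/allP/(_ y ys1) yx _]; apply: comm; rewrite ?s1D ?mem_rcons ?mem_head //.
  - by rewrite inE ys1 orbT.
  - by apply: contraNneq xNb => ->.
  - by move: p2; rewrite pairwise_cat /= => /and3P [_ _ /andP [/allP/(_ y yb)]].
rewrite foldl_rcons foldl_cat /= foldl_commute_last // -foldl_cat.
congr f; apply: IH.
- by move=> z zs; apply: s1D; rewrite mem_rcons inE zs orbT.
- by move: U; rewrite rcons_uniq => /andP [].
- rewrite -(perm_cons x); apply: perm_trans (perm_trans _ P) _.
    by rewrite perm_sym perm_rcons.
  by rewrite -cat1s perm_catCA.
- by move: p1; rewrite pairwise_rcons => /andP [].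
- exact: subseq_pairwise (cat_subseq (subseq_refl a) (subseq_cons b x)) p2.
Qed.

End CommutingFolds.

Section LabelledTrees.
Implicit Types (t u l r : atree) (g h k : lab).

Lemma aroot_mem u : aroot u \in alabels u.
Proof. by case: u => [g|g l r]; rewrite inE eqxx. Qed.

Lemma asub_node k l r g : asub (ANode k l r) g =
  if k == g then Some (ANode k l r) else
  if asub l g is Some u then Some u else asub r g.
Proof. by []. Qed.

Lemma asub_aroot t g u : asub t g = Some u -> aroot u = g.
Proof.
elim: t u => [h|h l IHl r IHr] u /=; first by case: eqP => // -> [<-].
case: eqP => [-> [<-] //|_].
by case E: (asub l g) => [v|]; [move=> [<-]; apply: IHl E | apply: IHr].
Qed.

Lemma asub_subset t g u : asub t g = Some u -> {subset alabels u <= alabels t}.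
Proof.
elim: t u => [h|h l IHl r IHr] u /=; first by case: eqP => // -> [<-].
case: eqP => [-> [<-] //|_].
case E: (asub l g) => [v|].
  by move=> [<-] x /(IHl _ E) xl; rewrite inE mem_cat xl orbT.
by move=> /IHr sub x /sub xr; rewrite inE mem_cat xr !orbT.
Qed.

Lemma asub_mem t g u : asub t g = Some u -> g \in alabels t.
Proof. by move=> tg; rewrite -(asub_aroot tg) (asub_subset tg) ?aroot_mem. Qed.

Lemma asub_None t g : g \notin alabels t -> asub t g = None.
Proof. by case E: (asub t g) => [u|] //; rewrite (asub_mem E). Qed.

Lemma asub_Some t g : g \in alabels t -> exists u, asub t g = Some u.
Proof.
elim: t => [h|h l IHl r IHr] /=; first by rewrite inE => /eqP ->; rewrite eqxx; eauto.
case: eqP => [_|hg]; first by eauto.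
rewrite inE mem_cat => /or3P [/eqP gh|gl|gr]; first by case: hg.
  by have [v ->] := IHl gl; eauto.
by case: (asub l g) => [v|]; eauto.
Qed.

Lemma asub_node_l k l r g : k != g -> g \in alabels l ->
  asub (ANode k l r) g = asub l g.
Proof. by move=> /negbTE kg /asub_Some [v lg]; rewrite asub_node kg lg. Qed.

Lemma asub_node_r k l r g : k != g -> g \notin alabels l ->
  asub (ANode k l r) g = asub r g.
Proof. by move=> /negbTE kg gl; rewrite asub_node kg asub_None. Qed.

Lemma alabels_node_uniq k l r : uniq (alabels (ANode k l r)) ->
  [/\ k \notin alabels l, k \notin alabels r, uniq (alabels l), uniq (alabels r)
    & forall x, x \in alabels l -> x \notin alabels r].
Proof.
rewrite /= cat_uniq mem_cat negb_or => /andP [/andP [kl kr] /and3P [ul lr ur]].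
by split=> // x xl; apply: contra lr => xr; apply/hasP; exists x.
Qed.

Lemma asub_uniq t g u : uniq (alabels t) -> asub t g = Some u -> uniq (alabels u).
Proof.
elim: t u => [h|h l IHl r IHr] u /=; first by case: eqP => // _ _ [<-].
move=> U; case: eqP => [_ [<-] //|_].
have [_ _ ul ur _] := alabels_node_uniq U.
by case E: (asub l g) => [v|]; [move=> [<-]; apply: IHl E | apply: IHr].
Qed.

Lemma asub_trans t g u h : uniq (alabels t) -> asub t g = Some u ->
  h \in alabels u -> asub t h = asub u h.
Proof.
elim: t g u h => [k|k l IHl r IHr] g u h U; first by rewrite /=; case: eqP => // -> [<-].
have [kl kr ul ur lNr] := alabels_node_uniq U.
rewrite asub_node; case: eqP => [-> [<-] //|_].
case E: (asub l g) => [v|] => [[<-]|E'] hu.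
  have hl := asub_subset E hu.
  rewrite asub_node_l; [exact: IHl E hu | | exact: hl].
  by apply: (contraNneq _ kl) => ->.
have hr := asub_subset E' hu.
rewrite asub_node_r; [exact: IHr E' hu | |].
  by apply: (contraNneq _ kr) => ->.
by apply: contraL hr; apply: lNr.
Qed.

Lemma descendants_asub t g u : asub t g = Some u -> descendants t g = behead (alabels u).
Proof. by rewrite /descendants => ->. Qed.

Lemma mem_descendants t g u x : asub t g = Some u -> x \in alabels u -> x != g ->
  x \in descendants t g.
Proof.
move=> tg; rewrite (descendants_asub tg) -(asub_aroot tg).
by case: u {tg} => [h|h l r] /=; rewrite in_cons => /predU1P [->|]; rewrite ?eqxx.
Qed.

Lemma descendants_trans t g u h : uniq (alabels t) -> asub t g = Some u ->
  h \in alabels u -> descendants t h = descendants u h.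
Proof. by move=> U tg hu; rewrite /descendants (asub_trans U tg hu). Qed.

Lemma descendants_root k l r : descendants (ANode k l r) k = alabels l ++ alabels r.
Proof. by rewrite /descendants /= eqxx. Qed.

Lemma descendants_node_l k l r g : k != g -> g \in alabels l ->
  descendants (ANode k l r) g = descendants l g.
Proof. by move=> kg gl; rewrite /descendants asub_node_l. Qed.

Lemma descendants_node_r k l r g : k != g -> g \notin alabels l ->
  descendants (ANode k l r) g = descendants r g.
Proof. by move=> kg gl; rewrite /descendants asub_node_r. Qed.

Lemma consistent_pairwise t o : consistent t o ->
  pairwise (fun x y => y \notin descendants t x) o.
Proof.
case/and3P=> U _ /allP before; apply/(pairwiseP (true, [::])) => a b ao bo ab.
apply/negP => /(allP (before _ (mem_nth _ ao))).
by rewrite !index_uniq // ltnNge (ltnW ab).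
Qed.

End LabelledTrees.

Section ClusterLabelledTrees.
Variables (K : finType) (cl : lab -> {set K}).
Implicit Types (t u l r : atree) (g h k : lab).

Fixpoint atree_wf t : bool :=
  match t with
  | ALeaf _ => true
  | ANode g l r => [&& cl g == cl (aroot l) :|: cl (aroot r),
                      [disjoint cl (aroot l) & cl (aroot r)], atree_wf l & atree_wf r]
  end.

Lemma atree_wf_node g l r : atree_wf (ANode g l r) =
  [&& cl g == cl (aroot l) :|: cl (aroot r),
      [disjoint cl (aroot l) & cl (aroot r)], atree_wf l & atree_wf r].
Proof. by []. Qed.

Lemma atree_wf_sub_root t g : atree_wf t -> g \in alabels t -> cl g \subset cl (aroot t).
Proof.
elim: t => [h|h l IHl r IHr] /=; first by move=> _; rewrite inE => /eqP ->.
case/and4P=> [/eqP clh _ wfl wfr]; rewrite inE mem_cat => /or3P [/eqP ->|gl|gr] //.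
  by rewrite clh (subset_trans (IHl wfl gl)) ?subsetUl.
by rewrite clh (subset_trans (IHr wfr gr)) ?subsetUr.
Qed.

Lemma atree_wf_asub t g u : atree_wf t -> asub t g = Some u -> atree_wf u.
Proof.
elim: t u => [h|h l IHl r IHr] u /=; first by case: eqP => // _ _ [<-].
move=> wf; case/and4P: (wf) => [_ _ wfl wfr].
case: eqP => [_ [<-] //|_].
by case E: (asub l g) => [v|]; [move=> [<-]; apply: IHl E | apply: IHr].
Qed.

Lemma atree_wf_disjoint t g h : atree_wf t -> uniq (alabels t) ->
  g \in alabels t -> h \in alabels t -> g != h ->
  h \notin descendants t g -> g \notin descendants t h -> [disjoint cl g & cl h].
Proof.
elim: t g h => [k|k l IHl r IHr] g h wf U.
  by rewrite !inE => /eqP -> /eqP ->; rewrite eqxx.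
case/and4P: wf => [_ Dlr wfl wfr]; have [kl kr ul ur lNr] := alabels_node_uniq U.
have disj_lr x y : x \in alabels l -> y \in alabels r -> [disjoint cl x & cl y].
  move=> xl yr; apply: disjointWl (atree_wf_sub_root wfl xl) _.
  exact: disjointWr (atree_wf_sub_root wfr yr) Dlr.
have kNl x : x \in alabels l -> k != x by move=> xl; apply: (contraNneq _ kl) => ->.
have kNr x : x \in alabels r -> k != x by move=> xr; apply: (contraNneq _ kr) => ->.
rewrite !inE !mem_cat => /or3P [/eqP-> | gl | gr] /or3P [/eqP-> | hl | hr].
- by rewrite eqxx.
- by rewrite descendants_root mem_cat hl.
- by rewrite descendants_root mem_cat hr orbT.
- by rewrite descendants_root mem_cat gl.
- by rewrite !descendants_node_l ?kNl //; apply: IHl.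
- by move=> *; apply: disj_lr.
- by rewrite descendants_root mem_cat gr orbT.
- by move=> *; rewrite disjoint_sym; apply: disj_lr.
have gNl : g \notin alabels l by apply: contraL gr; apply: lNr.
have hNl : h \notin alabels l by apply: contraL hr; apply: lNr.
by rewrite !descendants_node_r ?kNr //; apply: IHr.
Qed.

End ClusterLabelledTrees.

Lemma sibling_rcons (p : seq bool) b : sibling (rcons p b) = rcons p (~~ b).
Proof.
rewrite /sibling /parent size_rcons /= last_rcons.
by rewrite -[in take _ (rcons p b)]cats1 take_size_cat.
Qed.

Lemma setC_partition (K : finType) (X Y Z : {set K}) :
  Z = X :|: Y -> [disjoint X & Y] -> ~: X = Y :|: ~: Z.
Proof.
move=> -> XY; apply/setP => x; rewrite !inE negb_or.
by case xX: (x \in X); rewrite ?(disjointFr XY xX) //=; case: (x \in Y).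
Qed.

Section ClusterTrees.
Variable n : nat.
Implicit Types (T t : ctree n) (p q : seq bool).

Lemma csub_nil T : csub T [::] = Some T.
Proof. by case: T. Qed.

Lemma csub_cat T p q : csub T (p ++ q) = if csub T p is Some t then csub t q else None.
Proof. by elim: p T => [|b p IH] [X|X l r] //=; rewrite csub_nil. Qed.

Lemma csub_rcons T p b : csub T (rcons p b) =
  if csub T p is Some (CNode _ l r) then Some (if b then r else l) else None.
Proof.
rewrite -cats1 csub_cat; case: (csub T p) => [[X|X l r]|] //=.
by case: b; rewrite csub_nil.
Qed.

Lemma ctree_wf_csub T p t : ctree_wf T -> csub T p = Some t -> ctree_wf t.
Proof.
elim: p T => [|b p IH] T; first by rewrite csub_nil => wf [<-].
case: T => [X|X l r] //= /and4P [_ _ wfl wfr].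
by case: b; apply: IH.
Qed.

Lemma clus_split T p X l r b : ctree_wf T -> csub T p = Some (CNode X l r) ->
  clus T (false, p) = clus T (false, rcons p b) :|: clus T (false, rcons p (~~ b))
  /\ [disjoint clus T (false, rcons p b) & clus T (false, rcons p (~~ b))].
Proof.
move=> wf Tp; rewrite /clus /= !csub_rcons Tp.
case/and4P: (ctree_wf_csub wf Tp) => /eqP -> lr _ _.
by case: b => /=; rewrite ?(setUC (croot r)) ?(disjoint_sym (croot r)).
Qed.

Lemma csub_take_node T p Y k : (k < size p)%N -> csub T p = Some (CLeaf Y) ->
  exists X l r, csub T (take k p) = Some (CNode X l r).
Proof.
move=> kp; rewrite -[in csub T p](cat_take_drop k p) csub_cat.
case E: (drop k p) => [|b q].
  by move/eqP: E; rewrite -size_eq0 size_drop subn_eq0 leqNgt kp.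
by case: (csub T (take k p)) => [[X|X l r]|] //= _; eauto.
Qed.

End ClusterTrees.

Section AugmentedTrees.
Variables (n : nat) (T : ctree n).

(* The subtree carried at [g] by every augmented tree containing [g]. *)
Definition aug_subtree (g : lab) : atree :=
  if g.1 then augk T g.2 (size g.2) else basic_at T g.2.

Lemma conv_root p (t : ctree n) : aroot (conv p t) = (false, p).
Proof. by case: t. Qed.

Lemma basic_at_root p : aroot (basic_at T p) = (false, p).
Proof. by rewrite /basic_at; case: (csub T p) => [t|] //; rewrite conv_root. Qed.

Lemma asub_conv p (t : ctree n) g u : csub T p = Some t ->
  asub (conv p t) g = Some u -> u = aug_subtree g.
Proof.
elim: t p u => [X|X l IHl r IHr] p u Tp /=.
  by case: eqP => // <- [<-]; rewrite /aug_subtree /= /basic_at Tp.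
case: eqP => [<- [<-]|_]; first by rewrite /aug_subtree /= /basic_at Tp.
have Tl : csub T (rcons p false) = Some l by rewrite csub_rcons Tp.
have Tr : csub T (rcons p true) = Some r by rewrite csub_rcons Tp.
case E: (asub (conv (rcons p false) l) g) => [v|]; last exact: IHr Tr.
by move=> [<-]; apply: IHl Tl E.
Qed.

Lemma asub_basic_at p g u : asub (basic_at T p) g = Some u -> u = aug_subtree g.
Proof.
rewrite /basic_at; case E: (csub T p) => [t|]; first exact: asub_conv E.
by rewrite /=; case: eqP => // <- [<-]; rewrite /aug_subtree /= /basic_at E.
Qed.

Lemma augkSS p k : augk T p k.+2 =
  ANode (true, take k.+2 p) (basic_at T (sibling (take k.+2 p))) (augk T p k.+1).
Proof. by []. Qed.

Lemma augk_take p p' k : take k p = take k p' -> augk T p k = augk T p' k.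
Proof.
elim: k => [|[|k] IH] pp' //; first by rewrite /= pp'.
rewrite !augkSS pp' (IH _) //.
by rewrite -(take_takel p (leqnSn k.+1)) pp' take_takel.
Qed.

Lemma asub_augk p k g u : (k <= size p)%N ->
  asub (augk T p k) g = Some u -> u = aug_subtree g.
Proof.
elim: k u => [|[|k] IH] u kp; first by rewrite /=; case: eqP => // <- [<-].
  exact: asub_basic_at.
rewrite augkSS asub_node; case: eqP => [<- [<-]|_].
  rewrite /aug_subtree /= size_takel // -augkSS.
  by apply: augk_take; rewrite take_takel.
case E: (asub (basic_at T (sibling (take k.+2 p))) g) => [v|].
  by move=> [<-]; apply: asub_basic_at E.
exact/IH/ltnW.
Qed.

Lemma asub_aug p g u : asub (aug T p) g = Some u -> u = aug_subtree g.
Proof. exact: asub_augk. Qed.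

Lemma atree_wf_conv p (t : ctree n) : ctree_wf T -> csub T p = Some t ->
  atree_wf (clus T) (conv p t).
Proof.
move=> wf; elim: t p => [X|X l IHl r IHr] p Tp //=.
have Tl : csub T (rcons p false) = Some l by rewrite csub_rcons Tp.
have Tr : csub T (rcons p true) = Some r by rewrite csub_rcons Tp.
rewrite !conv_root /clus /= Tp Tl Tr (IHl _ Tl) (IHr _ Tr) !andbT.
by case/and4P: (ctree_wf_csub wf Tp) => -> -> _ _.
Qed.

Lemma atree_wf_basic_at p : ctree_wf T -> atree_wf (clus T) (basic_at T p).
Proof.
move=> wf; rewrite /basic_at; case E: (csub T p) => [t|] //.
exact: atree_wf_conv E.
Qed.

Hypotheses (T_wf : ctree_wf T) (T_root : croot T = setT).
Variables (p : seq bool) (Y : {set 'I_n}).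
Hypothesis p_leaf : csub T p = Some (CLeaf Y).

Lemma clus_augk_root k : (0 < k <= size p)%N ->
  clus T (aroot (augk T p k)) = ~: clus T (false, take k p).
Proof.
case: k => [|[|k]] // /andP [_ kp].
have [X [l [r T0]]] := csub_take_node (k:=0) kp p_leaf.
rewrite take0 in T0; rewrite /= basic_at_root (take_nth false kp) take0 sibling_rcons.
have [split disj] := clus_split (nth false p 0) T_wf T0.
by rewrite (setC_partition split disj) /clus /= csub_nil T_root setCT setU0.
Qed.

Lemma atree_wf_augk k : (k <= size p)%N -> atree_wf (clus T) (augk T p k).
Proof.
elim: k => [|[|k] IH] kp //; first exact: atree_wf_basic_at.
rewrite augkSS atree_wf_node basic_at_root atree_wf_basic_at // IH ?(ltnW kp) // andbT.
rewrite clus_augk_root ?(ltnW kp) //.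
have [X [l [r Tk]]] := csub_take_node kp p_leaf.
rewrite (take_nth false kp) sibling_rcons.
have [split disj] := clus_split (nth false p k.+1) T_wf Tk.
rewrite [clus T (true, _)]/clus /= -[X in ~: X]/(clus T (false, _)).
rewrite -[in ~: _]/(clus T (false, take k.+1 p)).
by rewrite (setC_partition split disj) eqxx disjoints_subset setCK split subsetUr.
Qed.

End AugmentedTrees.

Lemma atree_wf_aug n (T : ctree n) p : cluster_tree T -> is_leaf_pos T p ->
  atree_wf (clus T) (aug T p).
Proof.
case/andP=> /eqP T_root T_wf; rewrite /is_leaf_pos.
case E: (csub T p) => [[Y|]|] // _.
exact: (atree_wf_augk T_wf T_root E (leqnn _)).
Qed.

Section SubmatrixAlgebra.
Variables (C : numClosedFieldType) (n : nat).
Implicit Types (X Y B S : {set 'I_n}) (M N : 'M[C]_n).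

Lemma selmx_mulmxE X m (N : 'M[C]_(n, m)) a j : (@selmx C n X *m N) a j = N (enum_val a) j.
Proof.
rewrite mxE (bigD1 (enum_val a)) //= big1 => [|k ak]; first by rewrite mxE eqxx mul1r addr0.
by rewrite mxE eq_sym (negbTE ak) mul0r.
Qed.

Lemma mulmx_trselmxE Y m (N : 'M[C]_(m, n)) i b : (N *m (@selmx C n Y)^T) i b = N i (enum_val b).
Proof.
rewrite mxE (bigD1 (enum_val b)) //= big1 => [|k bk]; first by rewrite !mxE eqxx mulr1 addr0.
by rewrite !mxE eq_sym (negbTE bk) mulr0.
Qed.

Lemma submE X Y M a b : subm X Y M a b = M (enum_val a) (enum_val b).
Proof. by rewrite /subm mulmx_trselmxE selmx_mulmxE. Qed.

Lemma eq_subm X Y M M' :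
  {in X & Y, forall x y, M x y = M' x y} -> subm X Y M = subm X Y M'.
Proof. by move=> eqM; apply/matrixP => a b; rewrite !submE eqM ?enum_valP. Qed.

Lemma ctmxE M i j : ctmx M i j = Num.conj (M j i).
Proof. by rewrite !mxE. Qed.

Lemma ctmx_mul M N : ctmx (M *m N) = ctmx N *m ctmx M.
Proof. by rewrite /ctmx map_mxM trmx_mul. Qed.

Definition supported_on B S N := forall i j, N i j != 0 -> (i \in B) && (j \in S).

Lemma supported_on_row B S N i j : supported_on B S N -> i \notin B -> N i j = 0.
Proof. by move=> sN; apply: contraNeq => /sN /andP []. Qed.

Lemma supported_mul0 B S B' S' N N' :
  supported_on B S N -> supported_on B' S' N' -> [disjoint S & B'] -> N *m N' = 0.
Proof.
move=> sN sN' SB'; apply/matrixP => i j; rewrite !mxE big1 // => k _.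
have [/eqP -> | /sN /andP [_ kS]] := boolP (N i k == 0); first by rewrite mul0r.
by rewrite (supported_on_row j sN') ?mulr0 // (disjointFr SB' kS).
Qed.

Lemma invmx_1add_sq0 N : N *m N = 0 -> invmx (1%:M + N) = 1%:M - N.
Proof.
move=> NN; have inv1N : (1%:M + N) *m (1%:M - N) = 1%:M.
  by rewrite mulmxDl mulmxBr !mul1mx mulmxBr mulmx1 NN subr0 subrK.
have [unit1N _] := mulmx1_unit inv1N.
have := congr1 (mulmx (invmx (1%:M + N))) inv1N.
by rewrite mulmxA mulVmx // mul1mx mulmx1.
Qed.

Lemma supported_mulmx_row B S N M i j :
  supported_on B S N -> i \notin B -> ((1%:M - N) *m M) i j = M i j.
Proof.
move=> sN iB; rewrite mulmxBl mul1mx !mxE big1 ?subr0 // => k _.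
by rewrite (supported_on_row k sN iB) mul0r.
Qed.

Lemma supported_congr_entry B S N M i j :
  supported_on B S N -> i \notin B -> j \notin B ->
  ((1%:M - N) *m M *m ctmx (1%:M - N)) i j = M i j.
Proof.
move=> sN iB jB; rewrite !mxE (bigD1 j) //= big1 => [|k kj].
  rewrite ctmxE !mxE eqxx (supported_on_row j sN jB) subr0 conjC1 mulr1 addr0.
  by have := supported_mulmx_row M j sN iB; rewrite !mxE.
by rewrite ctmxE !mxE (supported_on_row k sN jB) eq_sym (negbTE kj) subr0 conjC0 mulr0.
Qed.

End SubmatrixAlgebra.

Section EliminationSteps.
Variables (C : numClosedFieldType) (n : nat) (A : 'M[C]_n) (T : ctree n) (t : atree).
Implicit Types (g h : lab) (M : 'M[C]_n) (st : 'M[C]_n * 'M[C]_n).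

Lemma bnd_subset X : bnd A X \subset X.
Proof. by apply/subsetP => x; rewrite inE => /andP []. Qed.

Lemma priv_subset_inner g : priv A T t g \subset inner A (clus T g).
Proof. by rewrite /priv; case: (asub t g) => [[?|? l r]|] //; apply: subsetDl. Qed.

Lemma priv_subset g : priv A T t g \subset clus T g.
Proof. exact: subset_trans (priv_subset_inner g) (subsetDl _ _). Qed.

Lemma bnd_priv_subset g : bnd A (clus T g) :|: priv A T t g \subset clus T g.
Proof. by rewrite subUset bnd_subset priv_subset. Qed.

Lemma priv_bnd_disjoint g : [disjoint priv A T t g & bnd A (clus T g)].
Proof.
rewrite disjoints_subset (subset_trans (priv_subset_inner g)) //.
by rewrite /inner setDE subsetIr.
Qed.

Definition elim_nil g M := elimL A T t g M - 1%:M.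

Lemma elim_nil_supported g M :
  supported_on (bnd A (clus T g)) (priv A T t g) (elim_nil g M).
Proof. by move=> i j; rewrite !mxE; case: ifP => // _; rewrite subrr eqxx. Qed.

Lemma elim_nil_sq0 g M : elim_nil g M *m elim_nil g M = 0.
Proof.
have supp := @elim_nil_supported g M.
exact: (supported_mul0 supp supp (priv_bnd_disjoint g)).
Qed.

Lemma stepE st g : step A T t st g =
  ((1%:M - elim_nil g st.1) *m st.1,
   (1%:M - elim_nil g st.1) *m st.2 *m ctmx (1%:M - elim_nil g st.1)).
Proof. by rewrite /step -(invmx_1add_sq0 (elim_nil_sq0 g st.1)) addrC subrK. Qed.

Lemma eq_elimL g M M' :
  (forall i j, i \in bnd A (clus T g) :|: priv A T t g -> M i j = M' i j) ->
  elimL A T t g M = elimL A T t g M'.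
Proof.
move=> eqM; rewrite /elimL.
by rewrite !(@eq_subm _ _ _ _ M M') // => i j iX _; apply: eqM; rewrite inE iX ?orbT.
Qed.

Lemma step_sigma_entry st g i j :
  i \notin bnd A (clus T g) -> j \notin bnd A (clus T g) ->
  (step A T t st g).2 i j = st.2 i j.
Proof.
by move=> iB jB; rewrite stepE; apply: supported_congr_entry (@elim_nil_supported g st.1) iB jB.
Qed.

Lemma eq_step t' st g : priv A T t g = priv A T t' g -> step A T t st g = step A T t' st g.
Proof. by move=> eq_priv; rewrite /step /elimL eq_priv. Qed.

Lemma step_commute st g h :
  [disjoint bnd A (clus T g) :|: priv A T t g & bnd A (clus T h) :|: priv A T t h] ->
  step A T t (step A T t st g) h = step A T t (step A T t st h) g.
Proof.
move=> gh; rewrite !stepE /=.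
set Ng := elim_nil g st.1; set Nh := elim_nil h st.1.
have sNg : supported_on _ _ Ng := @elim_nil_supported g st.1.
have sNh : supported_on _ _ Nh := @elim_nil_supported h st.1.
have -> : elim_nil h ((1%:M - Ng) *m st.1) = Nh.
  rewrite /Nh /elim_nil (eq_elimL (M' := st.1)) // => i j ih.
  apply: (supported_mulmx_row _ _ sNg).
  by apply: contraFN (disjointFl gh ih) => ig; rewrite inE ig.
have -> : elim_nil g ((1%:M - Nh) *m st.1) = Ng.
  rewrite /Ng /elim_nil (eq_elimL (M' := st.1)) // => i j ig.
  apply: (supported_mulmx_row _ _ sNh).
  by apply: contraFN (disjointFr gh ig) => ih; rewrite inE ih.
clearbody Ng Nh.
have NhNg : Nh *m Ng = 0.
  apply: (supported_mul0 sNh sNg); rewrite disjoint_sym.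
  exact: disjointWl (subsetUl _ _) (disjointWr (subsetUr _ _) gh).
have NgNh : Ng *m Nh = 0.
  exact: (supported_mul0 sNg sNh) (disjointWl (subsetUr _ _) (disjointWr (subsetUl _ _) gh)).
have commL : (1%:M - Nh) *m (1%:M - Ng) = (1%:M - Ng) *m (1%:M - Nh).
  by rewrite !mulmxBr !mulmxBl !mul1mx !mulmx1 NhNg NgNh !subr0 addrAC.
have congrM L L' S : L *m (L' *m S *m ctmx L') *m ctmx L = (L *m L') *m S *m ctmx (L *m L').
  by rewrite ctmx_mul !mulmxA.
by congr (_, _); rewrite ?congrM ?mulmxA commL.
Qed.

Lemma step_commute_disjoint st g h : [disjoint clus T g & clus T h] ->
  step A T t (step A T t st g) h = step A T t (step A T t st h) g.
Proof.
move=> gh; apply: step_commute.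
exact: disjointWl (bnd_priv_subset g) (disjointWr (bnd_priv_subset h) gh).
Qed.

End EliminationSteps.

Definition subtree_order (o : seq lab) (i : lab) (u : atree) : seq lab :=
  [seq x <- take (index i o).+1 o | x \in alabels u].

Section EliminationUpToNode.
Variables (C : numClosedFieldType) (n : nat) (A Sig : 'M[C]_n) (T : ctree n).
Variables (t : atree) (o : seq lab) (i : lab) (u : atree).
Hypotheses (t_uniq : uniq (alabels t)) (t_wf : atree_wf (clus T) t).
Hypotheses (o_consistent : consistent t o) (t_i : asub t i = Some u).

Let prefix := take (index i o).+1 o.

Lemma subtree_in_prefix x : x \in alabels u -> x \in prefix.
Proof.
case/and3P: o_consistent => _ o_perm /allP before xu.
have xo : x \in o by rewrite (perm_mem o_perm) (asub_subset t_i).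
have io : i \in o by rewrite (perm_mem o_perm) (asub_mem t_i).
rewrite in_take //; have [-> //|xi] := eqVneq x i.
exact/ltnW/(allP (before _ io))/(mem_descendants t_i).
Qed.

(* A node eliminated before [i] and outside its subtree is not an ancestor of [i]
   either, since ancestors come later in a consistent ordering. *)
Lemma prefix_outside_disjoint y : y \in prefix -> y \notin alabels u ->
  [disjoint clus T i & clus T y].
Proof.
case/and3P: o_consistent => _ o_perm /allP before yP yNu.
have yo : y \in o := mem_take yP.
apply: atree_wf_disjoint t_wf t_uniq (asub_mem t_i) _ _ _ _.
- by rewrite -(perm_mem o_perm).
- by apply: contraNneq yNu => <-; rewrite -(asub_aroot t_i) aroot_mem.
- by rewrite (descendants_asub t_i); apply: contra yNu; apply: mem_behead.
apply/negP => /(allP (before _ yo)).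
by move: yP; rewrite in_take // ltnS ltnNge => ->.
Qed.

Lemma Sigma_plus_subtree :
  subm (bnd A (clus T i)) (bnd A (clus T i)) (Sigma_plus A Sig T t o i) =
  subm (bnd A (clus T i)) (bnd A (clus T i))
    (foldl (step A T u) (A, Sig) (subtree_order o i u)).2.
Proof.
have sub_i x : x \in alabels u -> clus T x \subset clus T i.
  move=> xu; rewrite -(asub_aroot t_i).
  exact: atree_wf_sub_root (atree_wf_asub t_wf t_i) xu.
rewrite /Sigma_plus -/prefix (foldl_filter_split (P := fun x => x \in alabels u)); last first.
  move=> x y _ yP xu yNu st; apply: step_commute_disjoint.
  exact: disjointWl (sub_i _ xu) (prefix_outside_disjoint yP yNu).
apply: eq_subm => a b aB bB; rewrite foldl_cat.
rewrite (foldl_invariant (g := fun st : 'M[C]_n * 'M[C]_n => st.2 a b)) /=; last first.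
  move=> y; rewrite mem_filter => /andP [/= yNu yP] st.
  have iy := prefix_outside_disjoint yP yNu.
  have notin_bnd x : x \in bnd A (clus T i) -> x \notin bnd A (clus T y).
    move=> /(subsetP (bnd_subset A _)) /(disjointFr iy).
    by apply: contraFN => /(subsetP (bnd_subset A _)).
  exact: step_sigma_entry (notin_bnd _ aB) (notin_bnd _ bB).
congr ((_ : 'M[C]_n * 'M[C]_n).2 a b).
apply: eq_in_foldl => x; rewrite mem_filter => /andP [xu _] st.
by apply: eq_step; rewrite /priv (asub_trans t_uniq t_i xu).
Qed.

Lemma subtree_order_perm : perm_eq (subtree_order o i u) (alabels u).
Proof.
case/and3P: o_consistent => o_uniq _ _.
apply: uniq_perm; rewrite ?filter_uniq ?take_uniq ?(asub_uniq t_uniq t_i) // => x.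
by rewrite mem_filter andb_idr //; apply: subtree_in_prefix.
Qed.

Lemma subtree_order_pairwise :
  pairwise (fun x y => y \notin descendants u x) (subtree_order o i u).
Proof.
have : pairwise (fun x y => y \notin descendants t x) (subtree_order o i u).
  apply: subseq_pairwise (consistent_pairwise o_consistent).
  exact: subseq_trans (filter_subseq _ _) (take_subseq _ _).
apply: (sub_in_pairwise (P := fun x => x \in alabels u)).
  by move=> x y xu _ /=; rewrite (descendants_trans t_uniq t_i xu).
by apply/allP => x; rewrite mem_filter => /andP [].
Qed.

End EliminationUpToNode.

Lemma foldl_step_consistent_orders (C : numClosedFieldType) n (A : 'M[C]_n)
    (T : ctree n) u s1 s2 st :
  uniq (alabels u) -> atree_wf (clus T) u ->
  perm_eq s1 (alabels u) -> perm_eq s2 (alabels u) ->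
  pairwise (fun x y => y \notin descendants u x) s1 ->
  pairwise (fun x y => y \notin descendants u x) s2 ->
  foldl (step A T u) st s1 = foldl (step A T u) st s2.
Proof.
move=> u_uniq u_wf perm1 perm2 order1 order2.
apply: (foldl_perm_pairwise (D := fun x => x \in alabels u)) order1 order2 _ => //.
- move=> x y xu yu xy yNx xNy st'; apply: step_commute_disjoint.
  exact: atree_wf_disjoint u_wf u_uniq xu yu xy yNx xNy.
- by move=> x; rewrite (perm_mem perm1).
- by rewrite (perm_uniq perm1).
- by rewrite (perm_trans perm1) // perm_sym.
Qed.

Unset Implicit Arguments.

Theorem corollary4 (C : numClosedFieldType) (n : nat) (A Sig : 'M[C]_n)
    (T : ctree n) (pr ps : seq bool) (ordr ords : seq lab) :
  A \in unitmx -> struct_sym A -> sigma_pattern A Sig ->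
  cluster_tree T -> is_leaf_pos T pr -> is_leaf_pos T ps ->
  consistent (aug T pr) ordr -> consistent (aug T ps) ords ->
  elim_ok A Sig T (aug T pr) ordr -> elim_ok A Sig T (aug T ps) ords ->
  forall i : lab, i \in alabels (aug T pr) -> i \in alabels (aug T ps) ->
    subm (bnd A (clus T i)) (bnd A (clus T i)) (Sigma_plus A Sig T (aug T pr) ordr i)
    = subm (bnd A (clus T i)) (bnd A (clus T i)) (Sigma_plus A Sig T (aug T ps) ords i).
Proof.
move=> _ _ _ T_tree pr_leaf ps_leaf ordr_cons ords_cons _ _ i i_r i_s.
have labels_uniq p o : consistent (aug T p) o -> uniq (alabels (aug T p)).
  by case/and3P=> o_uniq o_perm _; rewrite -(perm_uniq o_perm).
have [u r_i] := asub_Some i_r.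
have [u' s_i] := asub_Some i_s.
have u'_u : u' = u by rewrite (asub_aug s_i) (asub_aug r_i).
rewrite {}u'_u in s_i.
have r_uniq := labels_uniq _ _ ordr_cons; have s_uniq := labels_uniq _ _ ords_cons.
have r_wf := atree_wf_aug T_tree pr_leaf; have s_wf := atree_wf_aug T_tree ps_leaf.
rewrite (Sigma_plus_subtree A Sig r_uniq r_wf ordr_cons r_i).
rewrite (Sigma_plus_subtree A Sig s_uniq s_wf ords_cons s_i).
congr (subm _ _ _.2); apply: foldl_step_consistent_orders.
- exact: asub_uniq r_uniq r_i.
- exact: atree_wf_asub r_wf r_i.
- exact: subtree_order_perm r_uniq ordr_cons r_i.
- exact: subtree_order_perm s_uniq ords_cons s_i.
- exact: subtree_order_pairwise r_uniq ordr_cons r_i.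
- exact: subtree_order_pairwise s_uniq ords_cons s_i.
Qed.
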